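(* Suppose $P$ has a positive real eigenvalue different from $1$, and let $\theta$ be the largest positive real eigenvalue of $P$ different from $1$. Then for every allowed word $u$ of $\Sigma_A$, the escape rate into the cylinder $C_u$ satisfies $0<\rho(C_u)\le-\ln\theta$.
   Context: Let $\Sigma=\{1,\dots,N\}$, $A$ an irreducible $N\times N$ $0$–$1$ matrix, $\Sigma_A=\{x\in\Sigma^{\mathbb N}:A_{x_nx_{n+1}}=1\ \forall n\}$ with left shift $\sigma$. A word is allowed if it occurs in some element of $\Sigma_A$; $C_u$ is the set of $x\in\Sigma_A$ beginning with $u$. $P$ is a row-stochastic matrix with $P_{ij}>0$ iff $A_{ij}=1$, $\mathbf p$ its stationary vector, $\mu=\mu_P$ the Markov measure $\mu(C_w)=p_{w_1}P_{w_1w_2}\cdots P_{w_{n-1}w_n}$. For a hole $H\subseteq\Sigma_A$, $\mathcal W_m=\{x:\sigma^ix\notin H,0\le i\le m\}$ and $\rho(H)=-\lim_m\frac1m\ln\mu(\mathcal W_m)$. *)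

From HB Require Import structures.
From mathcomp Require Import all_boot all_order all_algebra.
From mathcomp Require Import all_classical all_reals all_analysis.
Set Implicit Arguments. Unset Strict Implicit. Unset Printing Implicit Defensive.
Import Order.TTheory GRing.Theory Num.Theory.
Local Open Scope ring_scope.

Section Defs.
Variables (R : realType) (N : nat).

Definition zero_one (A : 'M[R]_N) : Prop :=
  forall i j, A i j = 0 \/ A i j = 1.

Definition irreducible_mx (A : 'M[R]_N) : Prop :=
  forall i j, exists k : nat, (0 < k)%N /\ 0 < (A ^+ k) i j.

Definition row_stochastic (P : 'M[R]_N) : Prop :=
  (forall i j, 0 <= P i j) /\ (forall i, \sum_j P i j = 1).

Definition stationary (P : 'M[R]_N) (p : 'rV[R]_N) : Prop :=
  (forall i, 0 <= p 0 i) /\ \sum_i p 0 i = 1 /\ p *m P = p.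

Definition SigmaA (A : 'M[R]_N) (x : nat -> 'I_N) : Prop :=
  forall n, A (x n) (x n.+1) = 1.

Definition allowed (A : 'M[R]_N) (u : seq 'I_N) : Prop :=
  exists x k, SigmaA A x /\ mkseq (fun i => x (k + i)%N) (size u) = u.

Fixpoint path_prob (P : 'M[R]_N) (a : 'I_N) (t : seq 'I_N) : R :=
  match t with
  | [::] => 1
  | b :: t' => P a b * path_prob P b t'
  end.

(* mu(C_w) = p_{w1} P_{w1 w2} ... P_{w_{n-1} w_n} *)
Definition mu_cyl (P : 'M[R]_N) (p : 'rV[R]_N) (w : seq 'I_N) : R :=
  match w with
  | [::] => 1
  | a :: t => p 0 a * path_prob P a t
  end.

(* For the hole H = C_u, W_m = {x : sigma^i x \notin C_u, 0 <= i <= m} is the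
   disjoint union of the cylinders C_w, |w| = m + |u|, such that u does not
   occur in w at any position i with 0 <= i <= m.  Hence mu(W_m) is the
   following finite sum of cylinder measures. *)
Definition avoids_upto (u : seq 'I_N) (m : nat) (w : seq 'I_N) : bool :=
  [forall i : 'I_m.+1, take (size u) (drop i w) != u].

Definition mu_W (P : 'M[R]_N) (p : 'rV[R]_N) (u : seq 'I_N) (m : nat) : R :=
  \sum_(w : (m + size u).-tuple 'I_N | avoids_upto u m w) mu_cyl P p w.

End Defs.

From HB Require Import structures.
From mathcomp Require Import all_boot all_order all_algebra.
From mathcomp Require Import all_classical all_reals all_analysis.
From mathcomp Require Import lra.
Import Order.TTheory GRing.Theory Num.Theory numFieldNormedType.Exports.
Local Open Scope classical_set_scope.
Local Open Scope ring_scope.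
Set Implicit Arguments. Unset Strict Implicit. Unset Printing Implicit Defensive.

(* Up to a factor between [min_s p_s] and [1], mu(W_m) is E_n, n = m + |u| - 1,
   the largest over states s of the probability that the chain started at s
   avoids u for n steps.  Cutting paths at one letter gives
   E_(k+l+1) <= E_k E_l, so by Fekete's lemma ln E_n / n converges to its
   infimum -rho, and rho > 0 because irreducibility gives E_K < 1 for some K.
   For rho <= -ln theta take a right eigenvector v of P for theta with
   v(last u) <= 0: as theta <> 1 it is orthogonal to the positive stationary
   vector, so v(s) > 0 for some s.  Killing the chain when u occurs can only
   increase E[v(X_n)], since this happens at the last letter of u, where
   v <= 0; hence theta^n v(s) <= (sum_i |v_i|) E_n. *)

Lemma sum_gt0_exists (R : realDomainType) (I : finType) (F : I -> R) :
  0 < \sum_i F i -> exists i, 0 < F i.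
Proof.
move=> sum_gt0; apply/existsP; apply: contraTT sum_gt0.
rewrite negb_exists -leNgt => /forallP F_le0.
by apply: sumr_le0 => i _; rewrite leNgt F_le0.
Qed.

Lemma weighted_sum_bigmax_bounds (R : realFieldType) (I : finType) (w F : I -> R) pm :
  0 < pm -> (forall i, pm <= w i) -> \sum_i w i = 1 -> (forall i, 0 <= F i) ->
  pm * \big[Order.max/0]_i F i <= \sum_i w i * F i <= \big[Order.max/0]_i F i.
Proof.
move=> pm_gt0 pm_le w_sum1 F_ge0.
have w_ge0 i : 0 <= w i by apply: le_trans (pm_le i); exact: ltW.
have wF_ge0 i : 0 <= w i * F i by rewrite mulr_ge0.
apply/andP; split.
  rewrite mulrC -ler_pdivlMr //; apply: bigmax_le => [|i _].
    by rewrite divr_ge0 ?sumr_ge0 // ltW.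
  rewrite ler_pdivlMr // (bigD1 i) //= mulrC.
  apply: le_trans (ler_wpM2r (F_ge0 i) (pm_le i)) _.
  by rewrite lerDl sumr_ge0.
rewrite -[leRHS]mul1r -w_sum1 mulr_suml; apply: ler_sum => i _.
by rewrite ler_wpM2l // le_bigmax.
Qed.

Section PositivePaths.
Variables (R : realType) (N : nat).
Implicit Types (A M P : 'M[R]_N) (p : 'rV[R]_N).

Definition pos_rel M := [rel a b | 0 < M a b].

Lemma mx_pow_gt0_path M k i j : (forall a b, 0 <= M a b) ->
  0 < (M ^+ k.+1) i j -> exists t, path (pos_rel M) i (rcons t j).
Proof.
move=> M_ge0; elim: k i => [|k IH] i.
  by rewrite expr1 => Mij; exists [::]; rewrite /= Mij.
rewrite exprS -mulmxE mxE => /sum_gt0_exists[l].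
have [Mil0|Mil_gt0] := eqVneq (M i l) 0; first by rewrite Mil0 mul0r ltxx.
have {}Mil_gt0 : 0 < M i l by rewrite lt_def Mil_gt0 M_ge0.
rewrite pmulr_rgt0 // => /IH[t lt].
by exists (l :: t); rewrite /= Mil_gt0.
Qed.

Lemma path_prob_gt0 P a t : path (pos_rel P) a t -> 0 < path_prob P a t.
Proof.
elim: t a => [|b t IH] a //= /andP[Pab abt].
by rewrite mulr_gt0 // IH.
Qed.

Lemma stationary_gt0_path P p a t : row_stochastic P -> stationary P p ->
  0 < p 0 a -> path (pos_rel P) a t -> 0 < p 0 (last a t).
Proof.
move=> [P_ge0 _] [p_ge0 [_ pP]]; elim: t a => [|b t IH] a //= pa /andP[Pab abt].
apply: IH abt; rewrite -pP mxE (bigD1 a) //=.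
apply: lt_le_trans (mulr_gt0 pa Pab) _; rewrite lerDl.
by apply: sumr_ge0 => i _; apply: mulr_ge0.
Qed.

Lemma pos_rel_support A P : zero_one A ->
  (forall i j, 0 < P i j <-> A i j = 1) -> pos_rel A =2 pos_rel P.
Proof.
move=> A01 PA a b /=; apply/idP/idP => [|/PA ->]; last exact: ltr01.
by case: (A01 a b) => Aab; rewrite Aab ?ltxx // => _; apply/PA.
Qed.

Lemma irreducible_path A P i j : zero_one A -> irreducible_mx A ->
  (forall i j, 0 < P i j <-> A i j = 1) ->
  exists t, path (pos_rel P) i (rcons t j).
Proof.
move=> A01 Airr PA; have [[|k] [//= _ Akij]] := Airr i j.
have A_ge0 a b : 0 <= A a b by case: (A01 a b) => ->.
have [t At] := mx_pow_gt0_path A_ge0 Akij.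
by exists t; rewrite -(eq_path (pos_rel_support A01 PA)).
Qed.

Lemma stationary_gt0 A P p : zero_one A -> irreducible_mx A ->
  row_stochastic P -> (forall i j, 0 < P i j <-> A i j = 1) ->
  stationary P p -> forall j, 0 < p 0 j.
Proof.
move=> A01 Airr Pst PA pst j.
have [i pi] : exists i, 0 < p 0 i.
  by apply: sum_gt0_exists; case: pst => _ [-> _]; exact: ltr01.
have [t ij] := irreducible_path i j A01 Airr PA.
by have := stationary_gt0_path Pst pst pi ij; rewrite last_rcons.
Qed.

Lemma allowed_path A P u0 u' : zero_one A ->
  (forall i j, 0 < P i j <-> A i j = 1) ->
  allowed A (u0 :: u') -> path (pos_rel P) u0 u'.
Proof.
move=> A01 PA [x [k [xA /= [<- <-]]]].
rewrite -(eq_path (pos_rel_support A01 PA)) addn0.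
have -> : [seq x (k + i)%N | i <- iota 1 (size u')]
          = [seq x i | i <- iota k.+1 (size u')].
  by rewrite -[k.+1]addn1 iotaDl -map_comp.
elim: (size u') k => [|n IH] k //=.
by rewrite xA ltr01 IH.
Qed.

Lemma exists_path_to_allowed A P u0 u' s : zero_one A -> irreducible_mx A ->
  (forall i j, 0 < P i j <-> A i j = 1) -> allowed A (u0 :: u') ->
  exists2 t, path (pos_rel P) s t & infix (u0 :: u') (s :: t).
Proof.
move=> A01 Airr PA u_allowed; have [t st] := irreducible_path s u0 A01 Airr PA.
exists (rcons t u0 ++ u').
  by rewrite cat_path st last_rcons (allowed_path A01 PA u_allowed).
by rewrite cat_rcons -cat_cons; exact: suffix_infix.
Qed.

End PositivePaths.

Section Eigenvectors.
Variables (R : realType) (N : nat) (P : 'M[R]_N) (th : R).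

Lemma right_eigenvector : eigenvalue P th ->
  exists2 v : 'cV[R]_N, P *m v = th *: v & v != 0.
Proof.
case/eigenvalueP => w wP w_neq0.
have : \det (P - th%:M) == 0.
  by apply/det0P; exists w => //; rewrite mulmxBr wP mul_mx_scalar subrr.
rewrite -det_tr => /det0P[z z_neq0 zP]; exists z^T; last by rewrite trmx_eq0.
move/eqP: zP; rewrite raddfB /= tr_scalar_mx mulmxBr mul_mx_scalar subr_eq0.
by move=> /eqP/(congr1 trmx); rewrite trmx_mul trmxK linearZ.
Qed.

Lemma stationary_orth_eigenvector (p : 'rV[R]_N) (v : 'cV[R]_N) :
  p *m P = p -> P *m v = th *: v -> th != 1 -> p *m v = 0.
Proof.
move=> pP Pv th_neq1; apply/eqP.
have : p *m v == th *: (p *m v) by rewrite -{1}pP -mulmxA Pv scalemxAr.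
rewrite -subr_eq0 -{1}[p *m v]scale1r -scalerBl scaler_eq0 subr_eq0.
by rewrite eq_sym (negbTE th_neq1).
Qed.

Lemma orth_positive_has_pos_entry (p : 'rV[R]_N) (v : 'cV[R]_N) :
  (forall i, 0 < p 0 i) -> p *m v = 0 -> v != 0 -> exists s, 0 < v s 0.
Proof.
move=> p_gt0 pv0 v_neq0; apply/existsP; apply: contraNT v_neq0.
rewrite negb_exists => /forallP v_le0; apply/eqP/colP => i; rewrite mxE.
have := congr1 (fun M : 'M[R]_1 => M 0 0) pv0; rewrite /= !mxE => pv_sum.
have terms_ge0 k : true -> 0 <= - (p 0 k * v k 0).
  by rewrite oppr_ge0 pmulr_rle0 // leNgt v_le0.
have sum0 : \sum_k - (p 0 k * v k 0) = 0 by rewrite sumrN pv_sum oppr0.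
have /eqP := psumr_eq0P terms_ge0 sum0 (i := i) isT.
by rewrite oppr_eq0 mulf_eq0 (gt_eqF (p_gt0 i)) => /eqP.
Qed.

Lemma exists_eigenfunction (p : 'rV[R]_N) (j : 'I_N) :
  eigenvalue P th -> th != 1 -> p *m P = p -> (forall i, 0 < p 0 i) ->
  exists v : 'I_N -> R,
    [/\ forall a, \sum_b P a b * v b = th * v a, v j <= 0 & exists s, 0 < v s].
Proof.
move=> ev th_neq1 pP p_gt0; have [v Pv v_neq0] := right_eigenvector ev.
have [w [Pw w_neq0 wj]] :
    exists w : 'cV[R]_N, [/\ P *m w = th *: w, w != 0 & w j 0 <= 0].
  have [vj|vj] := lerP (v j 0) 0; first by exists v.
  by exists (- v); rewrite mulmxN Pv scalerN oppr_eq0 mxE oppr_le0 ltW.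
have pw0 := stationary_orth_eigenvector pP Pw th_neq1.
have [s ws] := orth_positive_has_pos_entry p_gt0 pw0 w_neq0.
exists (fun i => w i 0); split => [a||]; last by exists s.
- by have := congr1 (fun M : 'cV[R]_N => M a 0) Pw; rewrite !mxE.
- exact: wj.
Qed.

End Eigenvectors.

Section Avoidance.
Variables (R : realType) (N : nat) (P : 'M[R]_N) (u : seq 'I_N).
Hypothesis P_ge0 : forall i j, 0 <= P i j.
Hypothesis P_sum1 : forall i, \sum_j P i j = 1.

Definition occurs (a : 'I_N) (x : seq 'I_N) := infix u (a :: x).

(* [avoidp n a x] is the probability that the chain, having produced the word
   [a :: x], runs [n] more steps without [u] occurring in the whole word. *)
Fixpoint avoidp (n : nat) (a : 'I_N) (x : seq 'I_N) : R :=
  if n is n'.+1 then \sum_b P (last a x) b * avoidp n' a (rcons x b)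
  else (~~ occurs a x)%:R.

Lemma avoidp_ge0 n a x : 0 <= avoidp n a x.
Proof.
elim: n x => [|n IH] x /=; first exact: ler0n.
by apply: sumr_ge0 => b _; apply: mulr_ge0.
Qed.

Lemma avoidp_le1 n a x : avoidp n a x <= 1.
Proof.
elim: n x => [|n IH] x /=; first by rewrite lern1 leq_b1.
rewrite -(P_sum1 (last a x)); apply: ler_sum => b _.
by rewrite ler_piMr.
Qed.

Lemma occurs_rcons a x b : occurs a x -> occurs a (rcons x b).
Proof.
rewrite /occurs -rcons_cons => /infix_trans; apply.
by rewrite -cats1 prefix_infix.
Qed.

Lemma occurs_rcons_last a x b :
  ~~ occurs a x -> occurs a (rcons x b) -> b = last b u.
Proof.
rewrite /occurs -rcons_cons infix_rconsl => /negbTE ->; rewrite orbF.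
case/suffixP => s /(congr1 (last b)); rewrite last_rcons last_cat.
by case: u.
Qed.

Lemma avoidp_succ_le n a x : avoidp n.+1 a x <= avoidp n a x.
Proof.
elim: n x => [|n IH] x; first last.
  by apply: ler_sum => b _; apply: ler_wpM2l => //; exact: IH.
rewrite /=; have [ox|_] := boolP (occurs a x).
  by rewrite big1 // => b _; rewrite occurs_rcons ?mulr0.
rewrite -[leRHS]/1 -[leRHS](P_sum1 (last a x)); apply: ler_sum => b _.
by rewrite ler_piMr // lern1 leq_b1.
Qed.

Lemma avoidp_le_mono k k' a x : (k <= k')%N -> avoidp k' a x <= avoidp k a x.
Proof.
move=> /subnKC <-; elim: (k' - k)%N => [|d IH]; first by rewrite addn0.
by rewrite addnS; apply: le_trans (avoidp_succ_le _ _ _) IH.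
Qed.

Lemma avoidp_hit t a x : occurs a (x ++ t) ->
  avoidp (size t) a x <= 1 - path_prob P (last a x) t.
Proof.
elim: t x => [|b t IH] x /=; first by rewrite cats0 => ->; rewrite subrr.
rewrite -cat_rcons => /IH; rewrite last_rcons => hit.
rewrite (bigD1 b) //= -[X in _ <= X - _](P_sum1 (last a x)) [in leRHS](bigD1 b) //=.
have rest : \sum_(i | i != b) P (last a x) i * avoidp (size t) a (rcons x i)
    <= \sum_(i | i != b) P (last a x) i.
  by apply: ler_sum => i _; rewrite ler_piMr // avoidp_le1.
have := ler_wpM2l (P_ge0 (last a x) b) hit; lra.
Qed.

Lemma avoidp_lt1 a t : path (pos_rel P) a t -> occurs a t ->
  avoidp (size t) a [::] < 1.
Proof.
move=> at_path oat; have := avoidp_hit (x := [::]) oat.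
by have := path_prob_gt0 at_path; lra.
Qed.

Lemma avoidp_cat_le n a x c z :
  avoidp n a (x ++ c :: z) <= (~~ occurs a x)%:R * avoidp n c z.
Proof.
elim: n z => [|n IH] z /=.
  have [ox|_] := boolP (occurs a x).
    by rewrite /occurs -cat_cons (infix_catr _ ox) mul0r.
  have [oc|_] := boolP (occurs c z); last by rewrite /= mulr1n mulr1 lern1 leq_b1.
  by rewrite /occurs -cat_cons (infix_catl _ oc) mulr0.
rewrite mulr_sumr; apply: ler_sum => b _.
rewrite last_cat /= -cats1 -catA cat_cons cats1 mulrCA.
exact: ler_wpM2l.
Qed.

Definition avoid_max n := \big[Order.max/0]_s avoidp n s [::].

Lemma avoid_max_ge0 n : 0 <= avoid_max n.
Proof. exact: bigmax_ge_id. Qed.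

Lemma avoidp_le_max n s : avoidp n s [::] <= avoid_max n.
Proof. exact: le_bigmax. Qed.

Lemma avoidp_add_le n l a x :
  avoidp (n + l).+1 a x <= avoidp n a x * avoid_max l.
Proof.
elim: n x => [|n IH] x /=; last first.
  rewrite mulr_suml; apply: ler_sum => b _; rewrite -mulrA.
  by apply: ler_wpM2l => //; exact: IH.
rewrite -[leRHS]mul1r -[X in _ <= X * _](P_sum1 (last a x)) mulr_suml.
apply: ler_sum => b _; apply: ler_wpM2l => //.
rewrite add0n -cats1; apply: le_trans (avoidp_cat_le _ _ _ _ _) _.
by apply: ler_wpM2l; [exact: ler0n | exact: avoidp_le_max].
Qed.

Lemma avoid_max_submul n l : avoid_max (n + l).+1 <= avoid_max n * avoid_max l.
Proof.
apply: bigmax_le => [|s _]; first by rewrite mulr_ge0 ?avoid_max_ge0.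
apply: le_trans (avoidp_add_le n l s [::]) _.
by rewrite ler_wpM2r ?avoid_max_ge0 ?avoidp_le_max.
Qed.

Lemma exists_avoid_max_lt1 :
  (forall s, exists2 t, path (pos_rel P) s t & occurs s t) ->
  exists K, avoid_max K < 1.
Proof.
move=> reach.
have [K _ K_lt1] : \forall K \near \oo, forall s, avoidp K s [::] < 1.
  apply: filter_forall => s; have [t st ost] := reach s.
  exists (size t) => // K /= tK.
  exact: le_lt_trans (avoidp_le_mono s [::] tK) (avoidp_lt1 st ost).
by exists K; apply: bigmax_lt => // s _; apply: K_lt1 => /=.
Qed.

End Avoidance.

Section KilledEigenfunction.
Variables (R : realType) (N : nat) (P : 'M[R]_N) (u : seq 'I_N).
Variables (v : 'I_N -> R) (th : R).
Hypothesis P_ge0 : forall i j, 0 <= P i j.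
Hypothesis Pv : forall a, \sum_b P a b * v b = th * v a.
Hypothesis th_gt0 : 0 < th.
Hypothesis v_last : forall b, v (last b u) <= 0.

(* [killed n a x] is the expectation of [v] after [n] more steps of the chain
   started from the word [a :: x] and killed as soon as [u] occurs. *)
Fixpoint killed (n : nat) (a : 'I_N) (x : seq 'I_N) : R :=
  if n is n'.+1 then \sum_b P (last a x) b * killed n' a (rcons x b)
  else (~~ occurs u a x)%:R * v (last a x).

Lemma killed_occurs n a x : occurs u a x -> killed n a x = 0.
Proof.
elim: n x => [|n IH] x /= ox; first by rewrite ox mul0r.
by apply: big1 => b _; rewrite IH ?mulr0 // occurs_rcons.
Qed.

(* Killing only happens on the last letter of [u], where [v <= 0]. *)
Lemma killed_ge n a x : ~~ occurs u a x -> th ^+ n * v (last a x) <= killed n a x.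
Proof.
elim: n x => [|n IH] x nox /=; first by rewrite nox expr0 !mul1r.
rewrite exprSr -mulrA -Pv mulr_sumr; apply: ler_sum => b _.
rewrite mulrCA; apply: ler_wpM2l => //.
have [ob|nob] := boolP (occurs u a (rcons x b)).
  rewrite killed_occurs // (occurs_rcons_last nox ob).
  by rewrite pmulr_rle0 ?exprn_gt0.
by have := IH _ nob; rewrite last_rcons.
Qed.

Lemma killed_le n a x : killed n a x <= (\sum_i `|v i|) * avoidp P u n a x.
Proof.
elim: n x => [|n IH] x /=.
  have [_|_] := boolP (occurs u a x); first by rewrite !mul0r mulr0.
  rewrite /= !mul1r mulr1; apply: le_trans (ler_norm _) _.
  by rewrite (bigD1 (last a x)) //= lerDl sumr_ge0.
rewrite mulr_sumr; apply: ler_sum => b _; rewrite mulrCA.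
by apply: ler_wpM2l => //; exact: IH.
Qed.

Lemma avoidp_ge_eigen n a x : ~~ occurs u a x ->
  th ^+ n * v (last a x) <= (\sum_i `|v i|) * avoidp P u n a x.
Proof. by move=> nox; apply: le_trans (killed_ge n nox) (killed_le n a x). Qed.

Lemma avoid_max_ge_geometric s : 0 < v s ->
  exists2 c, 0 < c & forall n, c * th ^+ n <= avoid_max P u n.
Proof.
move=> vs_gt0.
have nos : ~~ occurs u s [::].
  apply: contraTN vs_gt0; rewrite /occurs infixs1 -leNgt => os.
  by have <- : last s u = s by case/orP: os => /eqP ->.
have V_gt0 : 0 < \sum_i `|v i|.
  by rewrite (bigD1 s) //= ltr_pwDl ?sumr_ge0 // normr_gt0 gt_eqF.
exists (v s / \sum_i `|v i|) => [|n]; first exact: divr_gt0.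
apply: le_trans (avoidp_le_max P u n s); rewrite mulrAC ler_pdivrMr // mulrC.
by rewrite [leRHS]mulrC; exact: (avoidp_ge_eigen n nos).
Qed.

End KilledEigenfunction.

Lemma sum_tuple0 (V : nmodType) (T : finType) (F : seq T -> V) :
  \sum_(w : 0.-tuple T) F w = F [::].
Proof. by rewrite (big_pred1 [tuple]) // => t; rewrite [t]tuple0 /= eqxx. Qed.

Lemma sum_tuple_cons (V : nmodType) (T : finType) n (F : seq T -> V) :
  \sum_(w : n.+1.-tuple T) F w = \sum_s \sum_(t : n.-tuple T) F (s :: t).
Proof.
rewrite pair_big /=.
rewrite (reindex (fun st : T * n.-tuple T => [tuple of st.1 :: st.2])) //=.
exists (fun w : n.+1.-tuple T => (thead w, [tuple of behead w])).
  by case=> s t _; rewrite /= theadE; congr (_, _); apply: val_inj.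
by move=> w _; apply: val_inj; case: w => [[|a w]].
Qed.

Lemma sum_tuple_avoidp (R : realType) N (P : 'M[R]_N) u n a x :
  \sum_(t : n.-tuple 'I_N) path_prob P (last a x) t * (~~ occurs u a (x ++ t))%:R
  = avoidp P u n a x.
Proof.
pose F x (t : seq 'I_N) := path_prob P (last a x) t * (~~ occurs u a (x ++ t))%:R.
elim: n x => [|n IH] x; first by rewrite (sum_tuple0 (F x)) /F cats0 mul1r.
rewrite (sum_tuple_cons _ (F x)) /=; apply: eq_bigr => b _.
rewrite -IH mulr_sumr; apply: eq_bigr => t _ /=.
by rewrite last_rcons cat_rcons mulrA.
Qed.

Lemma avoids_uptoE N (u : seq 'I_N) m (w : seq 'I_N) :
  size w = (m + size u)%N -> avoids_upto u m w = ~~ infix u w.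
Proof.
move=> sw; apply/forallP/negP => [avoid /infixP[s [s' w_eq]] | noinf i].
  have si : (size s < m.+1)%N.
    move: sw; rewrite w_eq !size_cat addnCA addnC => /addIn <-.
    by rewrite ltnS leq_addr.
  by move: (avoid (Ordinal si)); rewrite /= w_eq drop_size_cat // take_size_cat ?eqxx.
apply/eqP => ui; apply: noinf; apply/infixP.
by exists (take i w), (drop (size u) (drop i w)); rewrite -{1}ui !cat_take_drop.
Qed.

Lemma mu_W_avoidp (R : realType) N (P : 'M[R]_N) p u0 u' m :
  mu_W P p (u0 :: u') m
  = \sum_s p 0 s * avoidp P (u0 :: u') (m + size u') s [::].
Proof.
pose F w := if avoids_upto (u0 :: u') m w then mu_cyl P p w else 0.
rewrite /mu_W big_mkcond /= addnS (sum_tuple_cons _ F); apply: eq_bigr => s _.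
rewrite -sum_tuple_avoidp mulr_sumr; apply: eq_bigr => t _ /=.
rewrite /F avoids_uptoE; last by rewrite /= size_tuple addnS.
by rewrite /occurs; case: infix; rewrite /= ?mulr0 ?mulr1.
Qed.

Section AverageLimits.
Variable R : realType.

Lemma cvg_cst_div_nat (c : R) : (fun n : nat => c / n%:R) @ \oo --> 0.
Proof.
rewrite -(cvg_shiftn 1) /=.
have -> : (fun n => c / (n + 1)%:R) = c \*: @harmonic R.
  by apply: funext => n; rewrite /= addn1.
by have := cvgZl_tmp (k := c) (@cvg_harmonic R); rewrite scaler0; apply.
Qed.

Lemma cvg_div_nat_shift (a : nat -> R) k (l : R) :
  (fun n => a n / n%:R) @ \oo --> l -> (fun n => a (n + k)%N / n%:R) @ \oo --> l.
Proof.
move=> al.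
suff : ((fun n => a (n + k)%N / (n + k)%:R) \* (cst 1 + (fun n => k%:R / n%:R)))
         @ \oo --> l * (1 + 0).
  rewrite addr0 mulr1; apply: cvg_trans; apply: near_eq_cvg; near=> n.
  have n_gt0 : (0 < n%:R :> R) by rewrite ltr0n; near: n; exists 1%N.
  have nk_neq0 : (n + k)%:R != 0 :> R by rewrite natrD gt_eqF // ltr_wpDr.
  rewrite /= !fctE -[X in X + _](divff (lt0r_neq0 n_gt0)) -mulrDl -natrD.
  by rewrite mulrA divfK.
apply: cvgM; last by apply: cvgD; [exact: cvg_cst | exact: cvg_cst_div_nat].
by move: al; rewrite -(cvg_shiftn k).
Unshelve. all: by end_near.
Qed.

Lemma cvg_div_nat_bounded_sub (a b : nat -> R) (C l : R) :
  (forall n, `|a n - b n| <= C) ->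
  (fun n => b n / n%:R) @ \oo --> l -> (fun n => a n / n%:R) @ \oo --> l.
Proof.
move=> ab bl.
have -> : (fun n => a n / n%:R) = (fun n => (a n - b n) / n%:R) + (fun n => b n / n%:R).
  by apply: funext => n; rewrite !fctE -mulrDl subrK.
rewrite -[X in _ --> X]add0r; apply: cvgD => //.
apply: (@squeeze_cvgr _ _ _ _ (fun n => - (C / n%:R)) (fun n => C / n%:R)).
- near=> n; rewrite -ler_norml normrM normfV normr_nat.
  by apply: ler_wpM2r; [rewrite invr_ge0 | exact: ab].
- by rewrite -oppr0; apply: cvgN; exact: cvg_cst_div_nat.
- exact: cvg_cst_div_nat.
Unshelve. all: by end_near.
Qed.

Section Fekete.
Variable h : nat -> R.
Hypothesis h_sub : forall m n, h (m + n)%N <= h m + h n.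

Lemma subadditive_mul j q : (0 < j)%N -> h (j * q)%N <= j%:R * h q.
Proof.
case: j => // j _; elim: j => [|j IH]; first by rewrite mul1n mul1r.
rewrite mulSn -[j.+2]addn1 natrD mulrDl mul1r addrC.
by apply: le_trans (h_sub _ _) _; rewrite lerD2l.
Qed.

Lemma subadditive_le_slope q n : (0 < q)%N -> (q <= n)%N ->
  h n <= n%:R * (h q / q%:R) + q%:R * (`|h q / q%:R| + `|h 1%N|).
Proof.
move=> q_gt0 qn; set X := h q / q%:R.
have hq : h q = q%:R * X by rewrite /X mulrC divfK ?pnatr_eq0 -?lt0n.
rewrite {1}(divn_eq n q); set j := (n %/ q)%N; set r := (n %% q)%N.
have j_gt0 : (0 < j)%N by rewrite divn_gt0.
have r_lt : (r < q)%N by rewrite ltn_pmod.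
have hjq : h (j * q)%N <= (j * q)%:R * X by rewrite natrM -mulrA -hq subadditive_mul.
have hr : h (j * q + r)%N <= (j * q)%:R * X + r%:R * `|h 1%N|.
  case: r r_lt => [|r] _; first by rewrite addn0 mul0r addr0.
  apply: le_trans (h_sub _ _) (lerD hjq _).
  rewrite -[r.+1]muln1; apply: le_trans (subadditive_mul _ _) _ => //.
  by rewrite muln1; apply: ler_wpM2l => //; exact: ler_norm.
have nE : n%:R = (j * q)%:R + r%:R :> R by rewrite -natrD -divn_eq.
apply: le_trans hr _; rewrite nE.
have /ltW rq : (r%:R : R) < q%:R by rewrite ltr_nat.
have XX : 0 <= X + `|X| by have := ler_norm (- X); rewrite normrN; lra.
have := mulr_ge0 (ler0n R r) XX; have := normr_ge0 X; have := normr_ge0 (h 1%N).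
by nra.
Qed.

Lemma subadditive_cvg_inf : (exists b, forall n, (0 < n)%N -> b <= h n / n%:R) ->
  (fun n => h n / n%:R) @ \oo --> inf [set h n / n%:R | n in [set n | (0 < n)%N]].
Proof.
move=> [b hb]; set S := [set _ | _ in _]; set l := inf S.
have S_inf : has_inf S.
  by split; [exists (h 1%N / 1%:R), 1%N | exists b => _ [n n_gt0 <-]; apply: hb].
have l_le n : (0 < n)%N -> l <= h n / n%:R.
  by move=> n_gt0; apply: ge_inf; [case: S_inf | exists n].
apply/cvgrPdist_lt => e e_gt0; have e2_gt0 : 0 < e / 2 by rewrite divr_gt0.
have [_ [q q_gt0 <-] hq] := inf_adherent e2_gt0 S_inf.
set C := q%:R * (`|h q / q%:R| + `|h 1%N|).
have small := cvgr_lt _ (cvg_cst_div_nat C) _ e2_gt0.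
near=> n.
have n_ge : (q <= n)%N by near: n; exists q.
have n_gt0 : (0 < n%:R :> R) by rewrite ltr0n (leq_trans q_gt0).
have Cn : C / n%:R < e / 2 by near: n; exact: small.
have hn : h n / n%:R <= h q / q%:R + C / n%:R.
  rewrite ler_pdivrMr // mulrDl divfK ?gt_eqF // mulrC.
  exact: subadditive_le_slope.
rewrite distrC ger0_norm ?subr_ge0 ?l_le -?(ltr0n R) //.
by rewrite -/l in hq; lra.
Unshelve. all: by end_near.
Qed.

End Fekete.

End AverageLimits.

Section EscapeRate.
Variables (R : realType) (E : nat -> R) (c th : R) (K : nat).
Hypotheses (c_gt0 : 0 < c) (th_gt0 : 0 < th).
Hypothesis E_ge : forall n, c * th ^+ n <= E n.
Hypothesis E_submul : forall m n, E (m + n).+1 <= E m * E n.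
Hypothesis E_K_lt1 : E K < 1.

Lemma E_gt0 n : 0 < E n.
Proof. by apply: lt_le_trans (E_ge n); rewrite mulr_gt0 ?exprn_gt0. Qed.

(* Extending [E] by [E (-1) = 1] turns [E_submul] into submultiplicativity. *)
Definition lnE n := ln (if n is n'.+1 then E n' else 1).

Lemma lnE_subadditive m n : lnE (m + n) <= lnE m + lnE n.
Proof.
case: m => [|m]; first by rewrite add0n [lnE 0]/lnE ln1 add0r.
case: n => [|n]; first by rewrite addn0 [lnE 0]/lnE ln1 addr0.
rewrite addSn addnS /lnE -lnM ?posrE ?E_gt0 //.
by rewrite ler_ln ?posrE ?mulr_gt0 ?E_gt0.
Qed.

Lemma lnE_ge n : (0 < n)%N -> n%:R * ln th + (ln c - ln th) <= lnE n.
Proof.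
case: n => // n _; have := E_ge n.
rewrite -ler_ln ?posrE ?E_gt0 ?mulr_gt0 ?exprn_gt0 // lnM ?posrE ?exprn_gt0 //.
rewrite lnXn // -mulr_natl /lnE => lnE_ge; rewrite -nat1r mulrDl mul1r; lra.
Qed.

Lemma lnE_cvg : exists2 l, (fun n => lnE n / n%:R) @ \oo --> l & ln th <= l < 0.
Proof.
set d := ln c - ln th.
have lnE_div_ge n : (0 < n)%N -> ln th + d / n%:R <= lnE n / n%:R.
  move=> n_gt0; have n_gt0' : 0 < n%:R :> R by rewrite ltr0n.
  by rewrite ler_pdivlMr // mulrDl divfK ?gt_eqF // mulrC lnE_ge.
have lb n : (0 < n)%N -> ln th - `|d| <= lnE n / n%:R.
  move=> n_gt0; apply: le_trans (lnE_div_ge n n_gt0).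
  have n_gt0' : 0 < n%:R :> R by rewrite ltr0n.
  have dn : `|d / n%:R| <= `|d|.
    by rewrite normrM normfV normr_nat ler_pdivrMr // ler_peMr // ler1n.
  by have := ler_norm (- (d / n%:R)); rewrite normrN; lra.
have S_lb : has_lbound [set lnE n / n%:R | n in [set n | (0 < n)%N]].
  by exists (ln th - `|d|) => _ [n n_gt0 <-]; exact: lb.
have := subadditive_cvg_inf lnE_subadditive (ex_intro _ _ lb).
set l := inf _ => lnE_l; exists l => //; apply/andP; split.
  apply: (ler_cvg_to _ lnE_l (f := cst (ln th) + (fun n => d / n%:R))).
    rewrite -[X in _ --> X]addr0.
    by apply: cvgD; [exact: cvg_cst | exact: cvg_cst_div_nat].
  by near=> n; rewrite !fctE lnE_div_ge //; near: n; exists 1%N.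
apply: le_lt_trans (ge_inf S_lb _) _; first by exists K.+1.
rewrite pmulr_llt0 ?invr_gt0 ?ltr0n // ln_lt0 // E_gt0 E_K_lt1.
Unshelve. all: by end_near.
Qed.

Lemma escape_rate_sandwich (a : nat -> R) (pm : R) (L : nat) : 0 < pm ->
  (forall m, pm * E (m + L)%N <= a m <= E (m + L)%N) ->
  exists rho, (fun m => - (ln (a m) / m%:R)) @ \oo --> rho /\ 0 < rho /\ rho <= - ln th.
Proof.
move=> pm_gt0 aE; have [l lnE_l /andP[l_ge l_lt0]] := lnE_cvg.
exists (- l); split; last by split; lra.
suff : (fun m => ln (a m) / m%:R) @ \oo --> l by move/cvgN.
apply: (cvg_div_nat_bounded_sub (C := `|ln pm|) _ (cvg_div_nat_shift L.+1 lnE_l)).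
move=> m; have /andP[lo hi] := aE m; have Em := E_gt0 (m + L).
have a_gt0 : 0 < a m by apply: lt_le_trans lo; rewrite mulr_gt0.
have pm_le1 : pm <= 1 by rewrite -(ler_pM2r Em) mul1r (le_trans lo).
rewrite addnS /lnE ler_norml.
have := ler_ln (mulr_gt0 pm_gt0 Em) a_gt0; rewrite lo lnM ?posrE //.
have := ler_ln a_gt0 Em; rewrite hi.
have : ln pm <= 0 by rewrite ln_le0.
have := ler_norm (- ln pm); rewrite normrN.
by lra.
Qed.

End EscapeRate.

Theorem theorem3p4 (R : realType) (N : nat) (A P : 'M[R]_N) (p : 'rV[R]_N)
  (theta : R) (u : seq 'I_N) :
  zero_one A -> irreducible_mx A ->
  row_stochastic P -> (forall i j, 0 < P i j <-> A i j = 1) ->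
  stationary P p ->
  eigenvalue P theta -> 0 < theta -> theta != 1 ->
  (forall lam : R, eigenvalue P lam -> 0 < lam -> lam != 1 -> lam <= theta) ->
  (0 < size u)%N -> allowed A u ->
  exists rho : R,
    (fun m : nat => - (ln (mu_W P p u m) / m%:R)) @ \oo --> rho /\
    0 < rho /\ rho <= - ln theta.
Proof.
move=> A01 Airr Pst PA pst ev th_gt0 th_neq1 _.
case: u => [|u0 u'] // _ u_allowed; set u := u0 :: u'.
have [P_ge0 P_sum1] := Pst; have p_gt0 := stationary_gt0 A01 Airr Pst PA pst.
have [v [Pv v_last [s vs_gt0]]] :=
  exists_eigenfunction (last u0 u') ev th_neq1 pst.2.2 p_gt0.
have [c c_gt0 E_ge] :=
  avoid_max_ge_geometric (u := u) P_ge0 Pv th_gt0 (fun=> v_last) vs_gt0.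
have [K E_K] : exists K, avoid_max P u K < 1.
  apply: exists_avoid_max_lt1 => // j.
  exact: exists_path_to_allowed A01 Airr PA u_allowed.
set pm := \big[Order.min/1]_j p 0 j.
have pm_gt0 : 0 < pm by apply: lt_bigmin.
have E_submul := avoid_max_submul u P_ge0 P_sum1.
apply: (escape_rate_sandwich c_gt0 th_gt0 E_ge E_submul E_K pm_gt0).
move=> m; rewrite mu_W_avoidp; apply: weighted_sum_bigmax_bounds => //.
- by move=> j; apply: bigmin_le.
- by case: pst => _ [].
- by move=> j; apply: avoidp_ge0.
Qed.
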